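(* Let $\Gamma$ be a finite simple graph with $n$ vertices and let $v_1,\dots,v_k$ be distinct vertices of $\Gamma$, each of full degree (i.e. each adjacent to all other vertices of $\Gamma$). Then $n^k$ divides $\det(\mathbf{J}+\mathbf{Q})$.
   Context: $\mathbf{J}$ is the $n\times n$ matrix all of whose entries are $1$. $\mathbf{Q}=\mathbf{\Delta}-\mathbf{A}$ is the Laplacian matrix of $\Gamma$, where $\mathbf{A}$ is the adjacency matrix of $\Gamma$ and $\mathbf{\Delta}$ is the diagonal matrix whose $i$-th diagonal entry is the degree of the $i$-th vertex. *)

From mathcomp Require Import all_boot all_order all_algebra.
Set Implicit Arguments. Unset Strict Implicit. Unset Printing Implicit Defensive.
Import GRing.Theory Num.Theory.
Local Open Scope ring_scope.

Definition simple_graph (n : nat) (e : rel 'I_n) : Prop :=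
  symmetric e /\ irreflexive e.

Definition deg (n : nat) (e : rel 'I_n) (i : 'I_n) : nat := #|[set j | e i j]|.

Definition adjmx (n : nat) (e : rel 'I_n) : 'M[int]_n :=
  \matrix_(i, j) (e i j)%:R.

Definition degmx (n : nat) (e : rel 'I_n) : 'M[int]_n :=
  \matrix_(i, j) ((i == j)%:R * (deg e i)%:R).

Definition laplacian (n : nat) (e : rel 'I_n) : 'M[int]_n := degmx e - adjmx e.

Definition onesmx (n : nat) : 'M[int]_n := const_mx 1.

Definition full_degree (n : nat) (e : rel 'I_n) (v : 'I_n) : Prop :=
  forall w : 'I_n, w != v -> e v w.

From mathcomp Require Import all_boot all_order all_algebra.
Import GRing.Theory Num.Theory.
Local Open Scope ring_scope.

(* At a vertex of full degree, the row of J + Q is n times the corresponding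
   row of the identity; so each of the k rows indexed by such vertices is
   divisible by n, and n^k divides the determinant. *)

Lemma det_scale_rows (R : comPzRingType) (n : nat) (S : {set 'I_n}) (c : R)
    (B : 'M[R]_n) :
  \det (\matrix_(i, j) (if i \in S then c * B i j else B i j))
    = c ^+ #|S| * \det B.
Proof.
pose d : 'rV[R]_n := \row_i (if i \in S then c else 1).
have -> : \matrix_(i, j) (if i \in S then c * B i j else B i j)
          = diag_mx d *m B.
  by apply/matrixP => i j; rewrite mul_diag_mx !mxE; case: ifP; rewrite ?mul1r.
rewrite det_mulmx det_diag; under eq_bigr do rewrite mxE.
by rewrite -big_mkcond prodr_const.
Qed.

Lemma dvdz_det_rows (n : nat) (S : {set 'I_n}) (c : int) (A : 'M[int]_n) :
  (forall i j, i \in S -> (c %| A i j)%Z) -> (c ^+ #|S| %| \det A)%Z.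
Proof.
move=> cA.
pose B := \matrix_(i, j) (if i \in S then (A i j %/ c)%Z else A i j).
have -> : A = \matrix_(i, j) (if i \in S then c * B i j else B i j).
  apply/matrixP => i j; rewrite !mxE; case: (boolP (i \in S)) => // iS.
  by rewrite mulrC divzK ?cA.
by rewrite (@det_scale_rows _ _ S c B) dvdz_mulr.
Qed.

Lemma deg_full (n : nat) (e : rel 'I_n) (v : 'I_n) :
  irreflexive e -> full_degree e v -> deg e v = n.-1.
Proof.
move=> irr fd; rewrite /deg -[in RHS](card_ord n) -(cardsC1 v).
apply: eq_card => w; rewrite !inE.
by case: (eqVneq w v) => [->|wv]; [rewrite irr | rewrite fd].
Qed.

Lemma onesmx_laplacian_full_row (n : nat) (e : rel 'I_n) (v j : 'I_n) :
  irreflexive e -> full_degree e v ->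
  (onesmx n + laplacian e) v j = n%:R * (v == j)%:R.
Proof.
move=> irr fd; rewrite !mxE deg_full //.
case: (eqVneq v j) => [<-|vj].
  have n_gt0 : (0 < n)%N by apply: leq_ltn_trans (ltn_ord v).
  by rewrite irr !mul1r mulr1 subr0 addrC natr1 prednK.
by rewrite (fd j) 1?eq_sym // mul0r mulr0 sub0r addrN.
Qed.

Theorem lemma3p6 (n k : nat) (e : rel 'I_n) (v : 'I_k -> 'I_n) :
  simple_graph e ->
  injective v ->
  (forall i : 'I_k, full_degree e (v i)) ->
  ((n ^ k)%N%:Z %| \det (onesmx n + laplacian e))%Z.
Proof.
move=> [_ irr] v_inj fd.
have card_full : #|v @: [set: 'I_k]| = k by rewrite card_imset // cardsT card_ord.
rewrite -natz natrX -[X in _ ^+ X]card_full.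
apply: dvdz_det_rows => _ j /imsetP[i _ ->].
by rewrite onesmx_laplacian_full_row // dvdz_mulr.
Qed.
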